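(* Let $K$ be a compact Hausdorff space without isolated points and let $X$ be a closed subspace of $C(K)$. The following are equivalent: (a) The pair $(X,C(K))$ has the Daugavet property. (b) For every $\varepsilon>0$, every $x^*\in S(X^* )$ and every nonempty open set $U\subset K$ there is a point $u\in U$ with $\|x^*+\delta_u^*|_X\|>2-\varepsilon$. (c) For every $x^*\in S(X^* )$ and every nonempty open set $U\subset K$ there is a nonempty closed $G_\delta$-set $G\subset U$ such that $\|x^*+\delta_u^*|_X\|=2$ for every $u\in G$.
   Context: $C(K)$ is the space of real continuous functions on $K$ with the sup norm. For $k\in K$, $\delta_k^*\in C(K)^*$ is the evaluation functional $\delta_k^*(f)=f(k)$, and $\delta_k^*|_X$ its restriction to $X$. $S(X^* )$ is the unit sphere of $X^*$. If $X$ is a closed subspace of a Banach space $Y$ with inclusion $J$, the pair $(X,Y)$ has the Daugavet property if every bounded rank-one linear operator $T:X\to Y$ satisfies $\|J+T\|=1+\|T\|$. *)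

From HB Require Import structures.
From mathcomp Require Import all_boot all_order all_algebra.
From mathcomp Require Import all_classical all_reals all_analysis.
Set Implicit Arguments. Unset Strict Implicit. Unset Printing Implicit Defensive.
Import Order.TTheory GRing.Theory Num.Theory numFieldNormedType.Exports.
Local Open Scope classical_set_scope.
Local Open Scope ring_scope.

Section Defs.
Context {R : realType} {K : topologicalType}.

Definition supnorm (f : K -> R) : R := sup [set `|f k| | k in [set: K]].

(* X is a closed linear subspace of C(K) (elements represented as
   continuous functions K -> R, with sup-norm). *)
Definition closed_subspace_CK (X : set (K -> R)) : Prop :=
  [/\ (forall f, X f -> continuous f),
      X (fun _ => 0),
      (forall f g, X f -> X g -> X (f \+ g)),
      (forall (c : R) f, X f -> X (fun k => c * f k)) &
      (forall f, continuous f ->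
         (forall e : R, 0 < e -> exists g, X g /\ supnorm (f \- g) < e) ->
         X f)].

Definition dual_norm (X : set (K -> R)) (phi : (K -> R) -> R) : R :=
  sup [set `|phi f| | f in [set f | X f /\ supnorm f <= 1]].

Definition in_dual (X : set (K -> R)) (phi : (K -> R) -> R) : Prop :=
  [/\ (forall f g, X f -> X g -> phi (f \+ g) = phi f + phi g),
      (forall (c : R) f, X f -> phi (fun k => c * f k) = c * phi f) &
      (exists M : R, forall f, X f -> `|phi f| <= M * supnorm f)].

Definition in_dual_sphere (X : set (K -> R)) (phi : (K -> R) -> R) : Prop :=
  in_dual X phi /\ dual_norm X phi = 1.

(* the evaluation functional delta_k^* (restricted to X when normed over X) *)
Definition delta (k : K) : (K -> R) -> R := fun f => f k.

Definition rank_one_op (X : set (K -> R)) (T : (K -> R) -> (K -> R)) : Prop :=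
  [/\ (forall f, X f -> continuous (T f)),
      (forall f g, X f -> X g -> T (f \+ g) = T f \+ T g),
      (forall (c : R) f, X f -> T (fun k => c * f k) = (fun k => c * T f k)),
      (exists M : R, forall f, X f -> supnorm (T f) <= M * supnorm f) &
      (exists g : K -> R, [/\ continuous g, g <> (fun _ => 0),
        (forall f, X f -> exists c : R, T f = (fun k => c * g k)) &
        (exists f, X f /\ T f <> (fun _ => 0))])].

Definition op_norm (X : set (K -> R)) (S : (K -> R) -> (K -> R)) : R :=
  sup [set supnorm (S f) | f in [set f | X f /\ supnorm f <= 1]].

Definition daugavet_pair (X : set (K -> R)) : Prop :=
  forall T, rank_one_op X T ->
    op_norm X (fun f => f \+ T f) = 1 + op_norm X T.

Definition Gdelta (G : set K) : Prop :=
  exists O : nat -> set K, (forall n, open (O n)) /\ G = \bigcap_n O n.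

End Defs.

(* (a) -> (b): for the rank-one operator T = x^* (x) g, with g a Urysohn bump
   equal to 1 at a point of U and 0 off U, the Daugavet equation gives some f
   in the unit ball and a point k with |f k + x^*(f) g k| close to 2; then g k
   is close to 1, so k lies in U and |x^*(f) + f k| is close to 2.
   (b) -> (a): a rank-one T factors as x^* (x) H with ||x^*|| = 1, so that
   ||T|| = ||H||.  Applying (b) on the open set where H is close to ||H|| gives
   a point u and f in the unit ball with x^*(f) and f u both close to 1, hence
   ||f + T f|| >= (f + T f)(u) is close to 1 + ||H||.
   (b) -> (c): u |-> ||x^* + delta_u|| is lower semicontinuous, so by (b) the
   sets V_n = {u | ||x^* + delta_u|| > 2 - 1/(n+1)} are open and dense.  In a
   compact Hausdorff space one finds open sets S_0 = U, S_1, ... with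
   closure S_(n+1) inside S_n /\ V_n; the intersection of these closures is a
   nonempty closed G_delta set on which the norm is 2. *)

From HB Require Import structures.
From mathcomp Require Import all_boot all_order all_algebra.
From mathcomp Require Import all_classical all_reals all_analysis.
From mathcomp Require Import lra ring.
Import Order.TTheory GRing.Theory Num.Theory numFieldNormedType.Exports.
Local Open Scope classical_set_scope.
Local Open Scope ring_scope.

Section SupImage.
Context {R : realType} {T : Type}.
Implicit Types (D : set T) (F : T -> R).

Lemma le_sup_image D F B x :
  (forall y, D y -> F y <= B) -> D x -> F x <= sup [set F y | y in D].
Proof.
move=> FB Dx; apply: ub_le_sup; last by exists x.
by exists B => _ [y Dy <-]; exact: FB.
Qed.

Lemma ge_sup_image D F c :
  D !=set0 -> (forall y, D y -> F y <= c) -> sup [set F y | y in D] <= c.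
Proof.
move=> [x Dx] Fc; apply: ge_sup; first by exists (F x), x.
by move=> _ [y Dy <-]; exact: Fc.
Qed.

Lemma sup_image_gt D F c :
  D !=set0 -> c < sup [set F y | y in D] -> exists2 y, D y & c < F y.
Proof.
move=> [x Dx] /sup_gt[|_ [y Dy <-] cF]; first by exists (F x), x.
by exists y.
Qed.

End SupImage.

Lemma le_of_small_defect {R : realType} (a b c d : R) : 0 < d -> 0 <= c ->
  (forall e, 0 < e -> e < d -> a - e * c <= b) -> a <= b.
Proof.
move=> d0 c0 abc; apply/ler_addgt0Pr => e e0.
pose e' := Num.min (d / 2) (e / (c + 1)).
have e'0 : 0 < e' by rewrite lt_min !divr_gt0 //; lra.
have e'd : e' < d by rewrite gt_min ltr_pdivrMr; lra.
have e'c : e' * c <= e.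
  have : e' <= e / (c + 1) by rewrite ge_min lexx orbT.
  rewrite ler_pdivlMr; nra.
by have := abc e' e'0 e'd; lra.
Qed.

Section SupNorm.
Context {R : realType} {K : topologicalType}.
Implicit Types f g : K -> R.

Lemma continuous_scale g (c : R) : continuous g -> continuous (fun k => c * g k).
Proof. by move=> cg k; exact: continuousM (@cst_continuous _ _ c k) (cg k). Qed.

Lemma continuous_add {f g} : continuous f -> continuous g -> continuous (f \+ g).
Proof. by move=> cf cg k; exact: continuousD (cf k) (cg k). Qed.

Lemma supnorm_void f : ~ inhabited K -> supnorm f = 0.
Proof.
move=> K0; rewrite /supnorm (_ : [set: K] = set0) ?image_set0 ?sup0 //.
by apply/seteqP; split => // k _; apply: K0; exists.
Qed.

Lemma supnorm_le f c : 0 <= c -> (forall k, `|f k| <= c) -> supnorm f <= c.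
Proof.
move=> c0 fc; have [[k]|K0] := pselect (inhabited K); last by rewrite supnorm_void.
by apply: ge_sup_image => //; exists k.
Qed.

Lemma supnorm_gt f c : 0 <= c -> c < supnorm f -> exists k, c < `|f k|.
Proof.
move=> c0 cf; apply: contrapT => /forallNP fc; move: cf; rewrite ltNge.
by rewrite supnorm_le // => k; rewrite leNgt; exact/negP/fc.
Qed.

Hypothesis cK : compact [set: K].

Lemma normr_le_supnorm {f} k : continuous f -> `|f k| <= supnorm f.
Proof.
move=> cf; have /compact_bounded[M [_ fM]] : compact (f @` [set: K]).
  by apply: continuous_compact => //; exact: continuous_subspaceT.
rewrite /supnorm; apply: (le_sup_image _ (fun k => `|f k|) (`|M| + 1)) => // y _.
apply: fM; last by exists y.
by rewrite (le_lt_trans (ler_norm M)) // ltrDl.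
Qed.

Lemma supnorm_ge0 {f} : continuous f -> 0 <= supnorm f.
Proof.
move=> cf; have [[k]|K0] := pselect (inhabited K); last by rewrite supnorm_void.
exact: le_trans (normr_ge0 _) (normr_le_supnorm k cf).
Qed.

End SupNorm.

Section CompactHausdorff.
Context {K : topologicalType}.
Hypotheses (hK : hausdorff_space K) (cK : compact [set: K]).

Lemma urysohn_bump {R : realType} {U : set K} {u0} : open U -> U u0 ->
  exists g : K -> R, [/\ continuous g, forall k, 0 <= g k <= 1, g u0 = 1 &
    forall k, ~ U k -> g k = 0].
Proof.
move=> oU Uu0; have disj : ~` U `&` [set u0] = set0.
  by apply/seteqP; split => // x [nUx /= x_u0]; apply: nUx; rewrite x_u0.
have [g [cg gU gu0 g01]] := urysohn_ext_itv (compact_normal hK cK)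
  (open_closedC oU) (compact_closed hK (@compact_set1 _ u0)) disj (@ltr01 R).
exists g; split => //.
- by move=> k; have := g01 (g k) (ex_intro2 _ _ k I erefl); rewrite /= in_itv.
- by apply: gu0; exists u0.
- by move=> k nUk; apply: gU; exists k.
Qed.

Lemma open_nbhs_closure_subset {W : set K} {x} : open W -> W x ->
  exists2 W' : set K, open W' /\ W' x & closure W' `<=` W.
Proof.
move=> oW Wx; have [V xV clV] := compact_regular hK cK (@filterT _ (nbhs x) _)
  (open_nbhs_nbhs (conj oW Wx)).
exists V°; first by split; [exact: open_interior | exact: xV].
by apply: subset_trans clV; apply: closureS; exact: interior_subset.
Qed.

Lemma nested_closed_bigcap_neq0 (F : nat -> set K) :
  (forall n, closed (F n)) -> (forall n, F n !=set0) ->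
  (forall n, F n.+1 `<=` F n) -> \bigcap_n F n !=set0.
Proof.
move=> clF F0 FS; have Fle n m : (n <= m)%N -> F m `<=` F n.
  move/subnKC <-; elim: (m - n)%N => [|k IH]; first by rewrite addn0.
  by rewrite addnS; exact: subset_trans (FS _) IH.
pose FF := filter_from [set: nat] F.
have FF_proper : ProperFilter FF.
  apply: filter_from_proper; last by move=> n _; exact: F0.
  apply: filter_from_filter; first by exists 0%N.
  move=> i j _ _; exists (maxn i j) => // x Fx.
  by split; apply: Fle Fx; rewrite ?leq_maxl ?leq_maxr.
have [u [_ clu]] := cK FF FF_proper (ex_intro2 _ _ 0%N I (@subsetT _ (F 0%N))).
by exists u => n _; apply: clF => B uB; apply: clu uB; exists n.
Qed.

Lemma dense_opens_closed_Gdelta (V : nat -> set K) (U : set K) :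
  (forall n, open (V n)) ->
  (forall n W, open W -> W !=set0 -> W `&` V n !=set0) ->
  open U -> U !=set0 ->
  exists G, [/\ G !=set0, closed G, Gdelta G, G `<=` U & G `<=` \bigcap_n V n].
Proof.
move=> oV dV oU U0.
have shrink (p : nat * set K) : exists W', open p.2 -> p.2 !=set0 ->
    [/\ open W', W' !=set0 & closure W' `<=` p.2 `&` V p.1].
  have [[oW W0]|bad] := pselect (open p.2 /\ p.2 !=set0); last first.
    by exists set0 => oW W0; exfalso; exact: bad.
  have [x Wx] := dV p.1 _ oW W0.
  have [W' [oW' W'x] clW'] := open_nbhs_closure_subset (openI oW (oV p.1)) Wx.
  by exists W' => _ _; split => //; exists x.
have [next nextP] := choice shrink.
pose S := fix S n := if n is m.+1 then next (m, S m) else U.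
have S_open_neq0 n : open (S n) /\ S n !=set0.
  by elim: n => [|n [oSn Sn0]] //; have [] := nextP (n, S n) oSn Sn0.
have S_closure n : closure (S n.+1) `<=` S n `&` V n.
  by have [oSn Sn0] := S_open_neq0 n; have [] := nextP (n, S n) oSn Sn0.
have S_clS n : closure (S n.+2) `<=` S n.+1 by move=> x /S_closure[].
exists (\bigcap_n closure (S n.+1)); split.
- apply: nested_closed_bigcap_neq0 => [n|n|n x /S_clS]; first exact: closed_closure.
    by have [_ [x Sx]] := S_open_neq0 n.+1; exists x; exact: subset_closure.
  exact: subset_closure.
- by apply: closed_bigI => n _; exact: closed_closure.
- exists (fun n => S n.+1); split => [n|]; first by have [] := S_open_neq0 n.+1.
  apply/seteqP; split => x Sx n _; last exact/subset_closure/Sx.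
  exact: S_clS (Sx n.+1 I).
- by move=> x /(_ 0%N I)/S_closure[].
- by move=> x Sx n _; have [] := S_closure n x (Sx n I).
Qed.

End CompactHausdorff.

Section Subspace.
Context {R : realType} {K : topologicalType}.
Hypothesis cK : compact [set: K].
Variable X : set (K -> R).
Hypothesis hX : closed_subspace_CK X.

Definition unit_ball : set (K -> R) := [set f | X f /\ supnorm f <= 1].

Let X_continuous {f} : X f -> continuous f.
Proof. by case: hX => cX _ _ _ _; exact: cX. Qed.

Lemma unit_ball0 : unit_ball (fun _ => 0).
Proof.
case: hX => _ X0 _ _ _; split => //.
by apply: supnorm_le => // k; rewrite normr0.
Qed.

Lemma unit_ballN {f} : unit_ball f -> unit_ball (fun k => -1 * f k).
Proof.
case: hX => _ _ _ XZ _ [Xf f1]; split; first exact: XZ.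
apply: supnorm_le => // k; rewrite normrM normrN1 mul1r.
exact: le_trans (normr_le_supnorm cK k (X_continuous Xf)) f1.
Qed.

Lemma unit_ball_le1 {f} k : unit_ball f -> `|f k| <= 1.
Proof.
by move=> [Xf f1]; exact: le_trans (normr_le_supnorm cK k (X_continuous Xf)) f1.
Qed.

Lemma dual_norm_le psi c :
  (forall f, unit_ball f -> `|psi f| <= c) -> dual_norm X psi <= c.
Proof. by apply: ge_sup_image; exists (fun _ => 0); exact: unit_ball0. Qed.

Lemma dual_norm_gt {psi c} :
  c < dual_norm X psi -> exists2 f, unit_ball f & c < `|psi f|.
Proof. by apply: sup_image_gt; exists (fun _ => 0); exact: unit_ball0. Qed.

Lemma op_norm_le S c :
  (forall f, unit_ball f -> supnorm (S f) <= c) -> op_norm X S <= c.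
Proof. by apply: ge_sup_image; exists (fun _ => 0); exact: unit_ball0. Qed.

Lemma op_norm_gt {S c} :
  c < op_norm X S -> exists2 f, unit_ball f & c < supnorm (S f).
Proof. by apply: sup_image_gt; exists (fun _ => 0); exact: unit_ball0. Qed.

Lemma supnorm_le_op_norm {S B f} :
  (forall g, unit_ball g -> supnorm (S g) <= B) -> unit_ball f ->
  supnorm (S f) <= op_norm X S.
Proof. exact: le_sup_image. Qed.

Lemma in_dual_bounded psi :
  in_dual X psi -> exists B, forall f, unit_ball f -> `|psi f| <= B.
Proof.
case=> _ _ [M psiM]; exists `|M| => f [Xf f1].
have := psiM f Xf; have := supnorm_ge0 cK (X_continuous Xf).
have := ler_norm M; have := normr_ge0 M; nra.
Qed.

Lemma normr_le_dual_norm {psi f} :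
  in_dual X psi -> unit_ball f -> `|psi f| <= dual_norm X psi.
Proof. by move=> /in_dual_bounded[B psiB] uf; exact: le_sup_image psiB uf. Qed.

Lemma dual_norm_ge0 psi : in_dual X psi -> 0 <= dual_norm X psi.
Proof.
by move=> psiX; exact: le_trans (normr_ge0 _) (normr_le_dual_norm psiX unit_ball0).
Qed.

Lemma normr_le_dual_norm_supnorm {psi f} :
  in_dual X psi -> X f -> `|psi f| <= dual_norm X psi * supnorm f.
Proof.
move=> psiX Xf; have [_ psiZ _] := psiX; case: hX => _ _ _ XZ _.
have s0 := supnorm_ge0 cK (X_continuous Xf).
have [s_eq0|s_neq0] := eqVneq (supnorm f) 0.
  suff -> : psi f = 0 by rewrite normr0 s_eq0 mulr0.
  have -> : f = (fun k => 0 * f k).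
    apply/funext => k; apply/eqP; rewrite mul0r -normr_eq0 eq_le normr_ge0 andbT.
    by rewrite -s_eq0 normr_le_supnorm //; exact: X_continuous.
  by rewrite psiZ ?mul0r.
have s_gt0 : 0 < supnorm f by rewrite lt0r s_neq0 s0.
rewrite -ler_pdivrMr // -[X in _ / X](ger0_norm s0) -normfV -normrM mulrC -psiZ //.
apply: (normr_le_dual_norm psiX); split; first exact: XZ.
apply: supnorm_le => // k; rewrite normrM ger0_norm ?invr_ge0 // ler_pdivrMl //.
by rewrite mulr1 normr_le_supnorm //; exact: X_continuous.
Qed.

Lemma in_dualZ a psi : in_dual X psi -> in_dual X (fun f => a * psi f).
Proof.
case=> psiD psiZ [M psiM]; split.
- by move=> f g Xf Xg; rewrite psiD // mulrDr.
- by move=> c f Xf; rewrite psiZ // mulrCA.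
exists (`|a| * M) => f Xf; rewrite normrM -mulrA ler_wpM2l //; exact: psiM.
Qed.

Lemma in_dualD {psi chi} :
  in_dual X psi -> in_dual X chi -> in_dual X (fun f => psi f + chi f).
Proof.
case=> psiD psiZ [M psiM] [chiD chiZ [N chiN]]; split.
- by move=> f g Xf Xg; rewrite psiD // chiD // addrACA.
- by move=> c f Xf; rewrite psiZ // chiZ // mulrDr.
exists (M + N) => f Xf; rewrite mulrDl.
exact: le_trans (ler_normD _ _) (lerD (psiM f Xf) (chiN f Xf)).
Qed.

Lemma in_dual_delta u : in_dual X (delta u).
Proof.
split => [//|//|]; exists 1 => f Xf; rewrite mul1r.
exact: normr_le_supnorm (X_continuous Xf).
Qed.

Lemma dual_normZ a psi :
  in_dual X psi -> dual_norm X (fun f => a * psi f) = `|a| * dual_norm X psi.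
Proof.
move=> psiX; apply/le_anti/andP; split.
  apply: dual_norm_le => f uf; rewrite normrM ler_wpM2l //.
  exact: normr_le_dual_norm.
have [->|a0] := eqVneq a 0.
  by rewrite normr0 mul0r dual_norm_ge0 //; exact: in_dualZ.
have a_gt0 : 0 < `|a| by rewrite normr_gt0.
rewrite -ler_pdivlMl //; apply: dual_norm_le => f uf.
rewrite ler_pdivlMl // -normrM; apply: normr_le_dual_norm uf.
exact: in_dualZ.
Qed.

Lemma in_dual_sphere_normalize psi : in_dual X psi -> 0 < dual_norm X psi ->
  in_dual_sphere X (fun f => (dual_norm X psi)^-1 * psi f).
Proof.
move=> psiX N0; split; first exact: in_dualZ.
by rewrite dual_normZ // normfV ger0_norm ?mulVf ?gt_eqF // ltW.
Qed.

Lemma in_dual_sphere_le1 {phi f} : in_dual_sphere X phi -> unit_ball f -> `|phi f| <= 1.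
Proof. by move=> [phiX <-]; exact: normr_le_dual_norm. Qed.

Lemma rank_one_factor T : rank_one_op X T ->
  exists phi H, [/\ in_dual_sphere X phi, continuous H, 0 < supnorm H &
    forall f, X f -> T f = (fun k => phi f * H k)].
Proof.
case=> Tcont TD TZ [M TM] [g [_ _ Trange [f0 [Xf0 Tf0]]]].
have [k0 Tf0k0] : exists k0, T f0 k0 != 0.
  apply: contrapT => /forallNP T0; apply: Tf0; apply/funext => k.
  by apply/eqP; apply: contrapT => /negP; exact: T0.
pose psi f := T f k0 / T f0 k0.
have TE f : X f -> T f = (fun k => psi f * T f0 k).
  move=> Xf; have [c Tf] := Trange f Xf; have [c0 Tf0c] := Trange f0 Xf0.
  move: Tf0k0; rewrite Tf0c mulf_eq0 negb_or => /andP[c00 gk0].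
  by apply/funext => k; rewrite /psi Tf Tf0c /=; field; rewrite c00 gk0.
have psiX : in_dual X psi.
  split.
  - by move=> f f' Xf Xf'; rewrite /psi TD //= mulrDl.
  - by move=> c f Xf; rewrite /psi TZ //= mulrA.
  exists (M / `|T f0 k0|) => f Xf; rewrite /psi normrM normfV mulrAC.
  rewrite ler_wpM2r ?invr_ge0 //; apply: le_trans _ (TM f Xf).
  by apply: (normr_le_supnorm cK); exact: Tcont.
pose N := dual_norm X psi.
have N_gt0 : 0 < N.
  rewrite lt_neqAle dual_norm_ge0 // andbT; apply/eqP => N0.
  have := normr_le_dual_norm_supnorm psiX Xf0.
  by rewrite -/N -N0 mul0r /psi divff // normr1 ler10.
have cTf0 : continuous (fun k => N * T f0 k) by exact/continuous_scale/Tcont.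
exists (fun f => N^-1 * psi f), (fun k => N * T f0 k); split => //.
- exact: in_dual_sphere_normalize.
- apply: lt_le_trans (normr_le_supnorm cK k0 cTf0).
  by rewrite normrM mulr_gt0 // normr_gt0 // gt_eqF.
- by move=> f Xf; rewrite TE //; apply/funext => k /=; field; rewrite gt_eqF.
Qed.

Lemma rank_one_op_tensor phi g f0 k0 : in_dual X phi -> continuous g ->
  X f0 -> phi f0 != 0 -> g k0 != 0 -> rank_one_op X (fun f k => phi f * g k).
Proof.
case=> phiD phiZ [M phiM] cg Xf0 phif0 gk0; split.
- by move=> f _; exact: continuous_scale.
- by move=> f f' Xf Xf'; apply/funext => k; rewrite /= phiD // mulrDl.
- by move=> c f Xf; apply/funext => k; rewrite phiZ // mulrA.
- exists (M * supnorm g) => f Xf; have phifM := phiM f Xf.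
  have g0 := supnorm_ge0 cK cg.
  apply: supnorm_le => [|k]; first by rewrite mulrAC mulr_ge0 // (le_trans _ phifM).
  rewrite normrM mulrAC ler_pM //; exact: (normr_le_supnorm cK k cg).
exists g; split => //.
- by move=> g0; move: gk0; rewrite g0 eqxx.
- by move=> f Xf; exists (phi f).
exists f0; split => // /(congr1 (fun h => h k0)) /eqP.
by rewrite mulf_eq0 (negbTE phif0) (negbTE gk0).
Qed.

Section RankOne.
Context {T : (K -> R) -> K -> R} {phi : (K -> R) -> R} {H : K -> R}.
Hypotheses (phi1 : in_dual_sphere X phi) (cH : continuous H)
  (TE : forall f, X f -> T f = (fun k => phi f * H k)).

Lemma continuous_rank_one {f} : X f -> continuous (T f).
Proof. by move=> Xf; rewrite TE //; exact: continuous_scale. Qed.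

Lemma supnorm_rank_one_le {f} : unit_ball f -> supnorm (T f) <= supnorm H.
Proof.
move=> uf; rewrite TE; last by case: uf.
apply: supnorm_le => [|k]; first exact: (supnorm_ge0 cK cH).
rewrite normrM -[leRHS]mul1r ler_pM ?normr_ge0 ?(in_dual_sphere_le1 phi1 uf) //.
exact: (normr_le_supnorm cK k cH).
Qed.

Lemma op_norm_rank_one : op_norm X T = supnorm H.
Proof.
have TH := @supnorm_rank_one_le; apply/le_anti; rewrite op_norm_le //=.
have T0 : 0 <= op_norm X T.
  have [X0 _] := unit_ball0; apply: le_trans _ (supnorm_le_op_norm TH unit_ball0).
  exact/(supnorm_ge0 cK)/continuous_rank_one.
apply: supnorm_le => // k; have [->|Hk0] := eqVneq (H k) 0; first by rewrite normr0.
have Hk : 0 < `|H k| by rewrite normr_gt0.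
have -> : `|H k| = dual_norm X phi * `|H k| by rewrite (proj2 phi1) mul1r.
rewrite -ler_pdivlMr //; apply: dual_norm_le => f uf; rewrite ler_pdivlMr // -normrM.
have Xf : X f by case: uf.
apply: le_trans _ (supnorm_le_op_norm TH uf).
have -> : phi f * H k = T f k by rewrite TE.
exact/(normr_le_supnorm cK)/continuous_rank_one.
Qed.

Lemma supnorm_id_add_rank_one_le {f} :
  unit_ball f -> supnorm (f \+ T f) <= 1 + supnorm H.
Proof.
move=> uf; have Xf : X f by case: uf.
apply: supnorm_le => [|k /=]; first by rewrite addr_ge0 ?(supnorm_ge0 cK).
apply: le_trans (ler_normD _ _) (lerD (unit_ball_le1 k uf) _).
apply: le_trans _ (supnorm_rank_one_le uf).
exact/(normr_le_supnorm cK)/continuous_rank_one.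
Qed.

Lemma supnorm_id_add_le_op_norm {f} :
  unit_ball f -> supnorm (f \+ T f) <= op_norm X (fun f => f \+ T f).
Proof. exact: supnorm_le_op_norm (@supnorm_id_add_rank_one_le). Qed.

Lemma op_norm_id_add_rank_one_le : op_norm X (fun f => f \+ T f) <= 1 + supnorm H.
Proof. exact: op_norm_le (@supnorm_id_add_rank_one_le). Qed.

End RankOne.

Definition daugavet_dense : Prop :=
  forall (e : R) (phi : (K -> R) -> R) (U : set K),
    0 < e -> in_dual_sphere X phi -> open U -> U !=set0 ->
    exists2 u, U u & dual_norm X (fun f => phi f + delta u f) > 2 - e.

Section DenseToDaugavet.
Hypothesis hb : daugavet_dense.

Lemma op_norm_id_add_ge_approx {T phi H} eps w0 :
  in_dual_sphere X phi -> continuous H ->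
  (forall f, X f -> T f = (fun k => phi f * H k)) ->
  0 < eps -> eps <= 1 -> eps <= supnorm H -> supnorm H - eps < H w0 ->
  1 + supnorm H - eps * (2 + supnorm H) <= op_norm X (fun f => f \+ T f).
Proof.
move=> phi1 cH TE e0 e1 et Hw0.
have oU : open (H @^-1` [set x | supnorm H - eps < x]).
  by apply: open_comp => [w _|]; [exact: cH | exact: open_gt].
have [u /= Hu phiu] := hb _ _ _ e0 phi1 oU (ex_intro _ w0 Hw0).
suff norming g : unit_ball g -> 2 - eps < phi g + g u ->
    1 + supnorm H - eps * (2 + supnorm H) <= op_norm X (fun f => f \+ T f).
  have [f uf] := dual_norm_gt phiu; have [s0|s0] := lerP 0 (phi f + delta u f).
    by rewrite ger0_norm //; exact: norming f uf.
  have [[_ phiZ _] _] := phi1; rewrite ltr0_norm // /delta => phif.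
  by apply: (norming _ (unit_ballN uf)); rewrite phiZ; [lra | case: uf].
move=> ug phig; have [Xg _] := ug.
have phig1 := in_dual_sphere_le1 phi1 ug; have gu1 := unit_ball_le1 u ug.
have gTu : `|g u + phi g * H u| <= op_norm X (fun f => f \+ T f).
  apply: le_trans _ (supnorm_id_add_le_op_norm phi1 cH TE ug).
  have -> : g u + phi g * H u = (g \+ T g) u by rewrite /= TE.
  apply: (normr_le_supnorm cK); apply: continuous_add; first exact: X_continuous.
  exact: (continuous_rank_one cH TE Xg).
have [gu_le1 phig_le1] : g u <= 1 /\ phi g <= 1 by split; apply: le_trans (ler_norm _) _.
have phigH : (1 - eps) * (supnorm H - eps) <= phi g * H u.
  have : 0 <= (phi g - (1 - eps)) * (H u - (supnorm H - eps)) by apply: mulr_ge0; lra.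
  nra.
have := ler_norm (g u + phi g * H u); nra.
Qed.

Lemma op_norm_id_add_ge {T phi H} :
  in_dual_sphere X phi -> continuous H ->
  (forall f, X f -> T f = (fun k => phi f * H k)) -> 0 < supnorm H ->
  1 + supnorm H <= op_norm X (fun f => f \+ T f).
Proof.
move=> phi1 cH TE H0.
apply: (@le_of_small_defect _ _ _ (2 + supnorm H) (Num.min 1 (supnorm H))).
- by rewrite lt_min ltr01.
- by rewrite addr_ge0 ?(supnorm_ge0 cK cH).
move=> eps e0; rewrite lt_min => /andP[e1 et].
have [w0 Hw0] : exists w0, supnorm H - eps < `|H w0| by apply: supnorm_gt; lra.
wlog Hw0_pos : phi H phi1 cH TE H0 e1 et Hw0 / supnorm H - eps < H w0.
  move=> pos; have [Hw0_ge0|Hw0_lt0] := lerP 0 (H w0).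
    by apply: (pos phi H) => //; rewrite -(ger0_norm Hw0_ge0).
  have HN : supnorm (fun k => -1 * H k) = supnorm H.
    by rewrite /supnorm; congr sup; apply: eq_imagel => k _; rewrite normrM normrN1 mul1r.
  rewrite -HN; apply: (pos (fun f => -1 * phi f)); rewrite ?HN //.
  - split; first by case: phi1 => ? _; exact: in_dualZ.
    by rewrite dual_normZ ?normrN1 ?mul1r; case: phi1.
  - exact: continuous_scale.
  - by move=> f Xf; rewrite TE //; apply/funext => k /=; ring.
  - by rewrite normrM normrN1 mul1r.
  - by rewrite ltr0_norm in Hw0; lra.
by apply: (op_norm_id_add_ge_approx eps w0 phi1 cH TE e0) => //; exact: ltW.
Qed.

Lemma daugavet_dense_daugavet_pair : daugavet_pair X.
Proof.
move=> T /rank_one_factor[phi [H [phi1 cH H0 TE]]].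
rewrite (op_norm_rank_one phi1 cH TE); apply/le_anti.
by rewrite (op_norm_id_add_rank_one_le phi1 cH TE) (op_norm_id_add_ge phi1 cH TE H0).
Qed.

End DenseToDaugavet.

Lemma daugavet_pair_dense (hK : hausdorff_space K) :
  daugavet_pair X -> daugavet_dense.
Proof.
move=> hd e phi U e0 phi1 oU [u0 Uu0].
have [g [cg g01 gu0 gU]] := urysohn_bump (R := R) hK cK oU Uu0.
have [f0 [Xf0 _] phif0] : exists2 f0, unit_ball f0 & 0 < `|phi f0|.
  by apply: dual_norm_gt; rewrite (proj2 phi1).
have T1 : rank_one_op X (fun f k => phi f * g k).
  apply: (rank_one_op_tensor _ _ _ u0 (proj1 phi1) cg Xf0).
    by rewrite -normr_gt0.
  by rewrite gu0 oner_eq0.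
pose d := Num.min e 1 / 2.
have d_gt0 : 0 < d by rewrite divr_gt0 // lt_min e0 ltr01.
have d_le : d <= 1 / 2 by rewrite ler_pM2r // ge_min lexx orbT.
have e_le : 2 * d <= e by rewrite mulrC -mulrA mulVf // mulr1 ge_min lexx.
have g_ge1 : 1 <= supnorm g.
  by rewrite -gu0 -[leLHS]ger0_norm ?(normr_le_supnorm cK u0 cg) // gu0.
have [f uf] : exists2 f, unit_ball f & 2 - d < supnorm (f \+ (fun k => phi f * g k)).
  apply: op_norm_gt; rewrite (hd _ T1).
  by rewrite (op_norm_rank_one phi1 cg (fun _ _ => erefl)); lra.
move=> /supnorm_gt[|k /= fk]; first lra.
have fk1 := unit_ball_le1 k uf; have phif1 := in_dual_sphere_le1 phi1 uf.
have /andP[gk0 gk1] := g01 k.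
have gk_big : 1 - d < g k.
  have := ler_normD (f k) (phi f * g k); rewrite normrM (ger0_norm gk0).
  have : `|phi f| * g k <= g k by rewrite ler_piMl.
  lra.
exists k; first by apply: contrapT => /gU gk_eq0; lra.
apply: lt_le_trans (normr_le_dual_norm (in_dualD (proj1 phi1) (in_dual_delta k)) uf).
have := ler_normD (phi f + f k) (phi f * (g k - 1)).
rewrite (_ : phi f + f k + phi f * (g k - 1) = f k + phi f * g k); last by ring.
rewrite normrM distrC (ger0_norm (_ : 0 <= 1 - g k)); last lra.
have : `|phi f| * (1 - g k) <= 1 - g k by rewrite ler_piMl // subr_ge0.
rewrite /delta; lra.
Qed.

Lemma dual_norm_add_delta_le2 phi u :
  in_dual_sphere X phi -> dual_norm X (fun f => phi f + delta u f) <= 2.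
Proof.
move=> phi1; apply: dual_norm_le => f uf; apply: le_trans (ler_normD _ _) _.
by have := in_dual_sphere_le1 phi1 uf; have := unit_ball_le1 u uf; rewrite /delta; lra.
Qed.

Lemma open_dual_norm_add_delta_gt phi c : in_dual X phi ->
  open [set u | c < dual_norm X (fun f => phi f + delta u f)].
Proof.
move=> phiX; rewrite openE => v /dual_norm_gt[f uf cf].
have cW : continuous (fun w => `|phi f + f w|).
  move=> w; apply: (continuous_comp (f := fun w => phi f + f w)).
    exact: continuousD (@cst_continuous _ _ (phi f) w) (X_continuous (proj1 uf) w).
  exact: (@norm_continuous R R^o).
have oW : open ((fun w => `|phi f + f w|) @^-1` [set x | c < x]).
  by apply: open_comp => [w _|]; [exact: cW | exact: open_gt].
apply: filterS (open_nbhs_nbhs (conj oW cf)) => w /= cw.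
exact: lt_le_trans cw (normr_le_dual_norm (in_dualD phiX (in_dual_delta w)) uf).
Qed.

Lemma daugavet_dense_Gdelta (hK : hausdorff_space K) : daugavet_dense ->
  forall phi U, in_dual_sphere X phi -> open U -> U !=set0 ->
  exists G : set K, [/\ G !=set0, closed G, Gdelta G, G `<=` U &
    forall u, G u -> dual_norm X (fun f => phi f + delta u f) = 2].
Proof.
move=> hb phi U phi1 oU U0.
pose V n := [set u | 2 - n.+1%:R^-1 < dual_norm X (fun f => phi f + delta u f)].
have oV n : open (V n) := open_dual_norm_add_delta_gt phi _ (proj1 phi1).
have dV n W : open W -> W !=set0 -> W `&` V n !=set0.
  move=> oW W0; have n_gt0 : 0 < n.+1%:R^-1 :> R by rewrite invr_gt0.
  by have [u Wu Du] := hb _ phi W n_gt0 phi1 oW W0; exists u.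
have [G [G0 clG GdG GU GV]] := dense_opens_closed_Gdelta hK cK V U oV dV oU U0.
exists G; split => // u Gu; apply/le_anti; rewrite dual_norm_add_delta_le2 //=.
rewrite leNgt; apply/negP => /ltr_add_invr[n]; rewrite -ltrBrDr => Dn.
by have := lt_trans (GV u Gu n I) Dn; rewrite ltxx.
Qed.

End Subspace.

Theorem mainTheorem5 (R : realType) (K : topologicalType)
  (hK : hausdorff_space K) (cK : compact [set: K])
  (noiso : forall k : K, ~ open [set k])
  (X : set (K -> R)) (hX : closed_subspace_CK X) :
  [<-> daugavet_pair X;
       forall (e : R) (phi : (K -> R) -> R) (U : set K),
         0 < e -> in_dual_sphere X phi -> open U -> U !=set0 ->
         exists2 u, U u & dual_norm X (fun f => phi f + delta u f) > 2 - e;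
       forall (phi : (K -> R) -> R) (U : set K),
         in_dual_sphere X phi -> open U -> U !=set0 ->
         exists G : set K, [/\ G !=set0, closed G, Gdelta G, G `<=` U &
           forall u, G u -> dual_norm X (fun f => phi f + delta u f) = 2]].
Proof.
tfae.
- exact: daugavet_pair_dense cK X hX hK.
- exact: daugavet_dense_Gdelta cK X hX hK.
move=> hc; apply: (daugavet_dense_daugavet_pair cK X hX) => e phi U e0 phi1 oU U0.
have [G [[u Gu] _ _ GU hG]] := hc phi U phi1 oU U0.
by exists u; [exact: GU | rewrite hG //; lra].
Qed.
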